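(* For every $\varepsilon>0$ and $M>0$ there exists $\delta>0$ such that the following holds. Let $u\in U$ and let $(u_n)_{n\ge1}$ be a sequence in $U$ such that $\{u\}\cup\{u_n:n\ge1\}$ is bounded, all first super-diagonal entries $u_{i,i+1}$ and $(u_n)_{i,i+1}$ have absolute value at most $M$, and $|(u_n)_{i,i+1}-u_{i,i+1}|\le\delta$ for all $n$ and $i$. Then for all $i,j$, $\limsup_{n\to\infty}\left|\theta_{1/n}(u_1u_2\cdots u_n)_{i,j}-\theta_{1/n}(u^n)_{i,j}\right|<\varepsilon$.
   Context: $U$ is the group of $d\times d$ upper triangular real matrices with diagonal entries $1$; for $t>0$, $(\theta_t(u))_{i,j}=t^{j-i}u_{i,j}$ for $j\ge i$. *)

(* classical reals. d x d real matrices are represented as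
   functions nat -> nat -> R, only the entries with indices < d being relevant. *)
From Stdlib Require Import Reals Lra Lia Arith.
Open Scope R_scope.

Definition mat := nat -> nat -> R.

Fixpoint rsum (n : nat) (f : nat -> R) : R :=
  match n with
  | O => 0
  | S m => rsum m f + f m
  end.

Definition mmul (d : nat) (A B : mat) : mat :=
  fun i j => rsum d (fun k => A i k * B k j).

Definition mid : mat := fun i j => if Nat.eqb i j then 1 else 0.

Fixpoint mpow (d : nat) (A : mat) (n : nat) : mat :=
  match n with
  | O => mid
  | S m => mmul d (mpow d A m) A
  end.

(* u_1 u_2 ... u_n  (the sequence u is indexed from 1; u 0 is unused) *)
Fixpoint mprodseq (d : nat) (u : nat -> mat) (n : nat) : mat :=
  match n with
  | O => mid
  | S m => mmul d (mprodseq d u m) (u (S m))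
  end.

Definition in_U (d : nat) (A : mat) : Prop :=
  forall i j, (i < d)%nat -> (j < d)%nat ->
    (A i i = 1) /\ ((j < i)%nat -> A i j = 0).

(* dilation theta_t: (theta_t u)_{i,j} = t^(j-i) u_{i,j} for j >= i
   (entries below the diagonal are left unchanged; they are 0 on U) *)
Definition theta (t : R) (A : mat) : mat :=
  fun i j => if Nat.leb i j then t ^ (j - i) * A i j else A i j.

Definition limsup_lt (a : nat -> R) (e : R) : Prop :=
  exists e', e' < e /\ exists N : nat, forall n : nat, (N <= n)%nat -> a n <= e'.

From Stdlib Require Import Reals Lra Lia.
Open Scope R_scope.

(* Write P_n = u_1 ... u_n, Q_n = u^n and g = j - i.  Expanding the last column of a product
   with a unipotent upper triangular factor, entry (i, j+1) of P_(n+1) is entry (i, j+1) of P_n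
   plus at most M times entry (i, j) plus lower-order terms; by induction on n and g this gives
   |P_n(i,j)| <= C^g (n+L)^g, and the same recursion applied to P_n - Q_n, whose super-diagonal
   increments are of size delta, gives |P_n(i,j) - Q_n(i,j)| <= delta C^g (n+L)^g.  The
   dilation theta_(1/n) divides entry (i,j) by n^g, so for n >= L the difference is at most
   delta (2C)^d, which the choice of delta makes smaller than eps. *)

Lemma rsum_ext n f g : (forall k, (k < n)%nat -> f k = g k) -> rsum n f = rsum n g.
Proof. induction n as [|n IH]; intros H; simpl; auto. rewrite IH, H by (auto; lia). reflexivity. Qed.

Lemma rsum_plus n f g : rsum n f + rsum n g = rsum n (fun k => f k + g k).
Proof. induction n as [|n IH]; simpl; [ring|]. rewrite <- IH. ring. Qed.

Lemma rsum_minus n f g : rsum n f - rsum n g = rsum n (fun k => f k - g k).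
Proof. induction n as [|n IH]; simpl; [ring|]. rewrite <- IH. ring. Qed.

Lemma rsum_scal_l n c f : c * rsum n f = rsum n (fun k => c * f k).
Proof. induction n as [|n IH]; simpl; [ring|]. rewrite <- IH. ring. Qed.

Lemma rsum_le n f g : (forall k, (k < n)%nat -> f k <= g k) -> rsum n f <= rsum n g.
Proof.
  induction n as [|n IH]; intros H; simpl; [lra|].
  pose proof (IH (fun k Hk => H k ltac:(lia))). pose proof (H n ltac:(lia)). lra.
Qed.

Lemma rsum_le_const n f c : (forall k, (k < n)%nat -> f k <= c) -> rsum n f <= INR n * c.
Proof.
  induction n as [|n IH]; intros H; cbn [rsum]; [simpl; lra|]. rewrite S_INR.
  pose proof (IH (fun k Hk => H k ltac:(lia))). pose proof (H n ltac:(lia)). lra.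
Qed.

Lemma Rabs_rsum_le n f : Rabs (rsum n f) <= rsum n (fun k => Rabs (f k)).
Proof.
  induction n as [|n IH]; simpl; [rewrite Rabs_R0; lra|].
  pose proof (Rabs_triang (rsum n f) (f n)). lra.
Qed.

Lemma rsum_zero n f : (forall k, (k < n)%nat -> f k = 0) -> rsum n f = 0.
Proof.
  induction n as [|n IH]; intros H; simpl; [reflexivity|].
  rewrite IH, H by (auto; lia). ring.
Qed.

Lemma rsum_truncate m n f :
  (m <= n)%nat -> (forall k, (m <= k)%nat -> (k < n)%nat -> f k = 0) -> rsum n f = rsum m f.
Proof.
  induction n as [|n IH]; intros Hmn H; [now replace m with 0%nat by lia|].
  destruct (Nat.eq_dec m (S n)) as [->|Hne]; [reflexivity|].
  simpl. rewrite IH, H by (auto; lia). ring.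
Qed.

Lemma rsum_single n f m :
  (m < n)%nat -> (forall k, (k < n)%nat -> k <> m -> f k = 0) -> rsum n f = f m.
Proof.
  intros Hm H. rewrite (rsum_truncate (S m)) by (auto; intros; apply H; lia).
  simpl. rewrite rsum_zero by (intros; apply H; lia). ring.
Qed.

Definition msub (A B : mat) : mat := fun i j => A i j - B i j.

Lemma mmul_sub_decomp d P Q V W i j :
  mmul d P V i j - mmul d Q W i j = mmul d (msub P Q) V i j + mmul d Q (msub V W) i j.
Proof.
  unfold mmul, msub. rewrite rsum_minus, rsum_plus. apply rsum_ext. intros. ring.
Qed.

Lemma mmul_last_col d A V i j :
  (S j < d)%nat -> (forall k, (S j < k)%nat -> (k < d)%nat -> V k (S j) = 0) ->
  mmul d A V i (S j) =
    A i (S j) * V (S j) (S j) + A i j * V j (S j) + rsum j (fun k => A i k * V k (S j)).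
Proof.
  intros Hj Hcol. unfold mmul.
  rewrite (rsum_truncate (S (S j))) by (auto; intros k Hk Hkd; rewrite Hcol by lia; ring).
  simpl. ring.
Qed.

Lemma mmul_last_col_bound d A V i j b0 b1 b2 :
  (S j < d)%nat -> (forall k, (S j < k)%nat -> (k < d)%nat -> V k (S j) = 0) ->
  Rabs (V (S j) (S j)) <= b0 -> Rabs (V j (S j)) <= b1 ->
  (forall k, (k < j)%nat -> Rabs (V k (S j)) <= b2) ->
  Rabs (mmul d A V i (S j))
    <= b0 * Rabs (A i (S j)) + b1 * Rabs (A i j) + b2 * rsum j (fun k => Rabs (A i k)).
Proof.
  intros Hj Hcol H0 H1 H2. rewrite mmul_last_col by auto.
  assert (Hs : Rabs (rsum j (fun k => A i k * V k (S j)))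
               <= b2 * rsum j (fun k => Rabs (A i k))).
  { eapply Rle_trans; [apply Rabs_rsum_le|]. rewrite rsum_scal_l. apply rsum_le.
    intros k Hk. rewrite Rabs_mult, Rmult_comm.
    apply Rmult_le_compat_r; [apply Rabs_pos | auto]. }
  pose proof (Rabs_pos (A i (S j))). pose proof (Rabs_pos (A i j)).
  assert (Rabs (A i (S j)) * Rabs (V (S j) (S j)) <= Rabs (A i (S j)) * b0)
    by (apply Rmult_le_compat_l; auto).
  assert (Rabs (A i j) * Rabs (V j (S j)) <= Rabs (A i j) * b1)
    by (apply Rmult_le_compat_l; auto).
  pose proof (Rabs_triang (A i (S j) * V (S j) (S j) + A i j * V j (S j))
                          (rsum j (fun k => A i k * V k (S j)))).
  pose proof (Rabs_triang (A i (S j) * V (S j) (S j)) (A i j * V j (S j))).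
  rewrite !Rabs_mult in *. lra.
Qed.

Lemma in_U_mid d : in_U d mid.
Proof.
  intros i j Hi Hj. unfold mid. rewrite Nat.eqb_refl. split; auto.
  intros. destruct (Nat.eqb_spec i j); [lia | auto].
Qed.

Lemma in_U_mmul d A B : in_U d A -> in_U d B -> in_U d (mmul d A B).
Proof.
  intros HA HB i j Hi Hj. unfold mmul. split.
  - rewrite (rsum_single d _ i Hi).
    + rewrite (proj1 (HA i i Hi Hi)), (proj1 (HB i i Hi Hi)). ring.
    + intros k Hk Hne. destruct (Nat.lt_ge_cases k i).
      * rewrite (proj2 (HA i k Hi Hk)) by auto. ring.
      * rewrite (proj2 (HB k i Hk Hi)) by lia. ring.
  - intros Hji. apply rsum_zero. intros k Hk. destruct (Nat.lt_ge_cases k i).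
    + rewrite (proj2 (HA i k Hi Hk)) by auto. ring.
    + rewrite (proj2 (HB k j Hk Hj)) by lia. ring.
Qed.

Lemma in_U_mprodseq d vs :
  (forall n, (1 <= n)%nat -> in_U d (vs n)) -> forall n, in_U d (mprodseq d vs n).
Proof.
  intros H n. induction n; simpl; [apply in_U_mid|]. apply in_U_mmul; auto. apply H; lia.
Qed.

Lemma column_above_diag_zero d (V : mat) j :
  in_U d V -> (S j < d)%nat -> forall k, (S j < k)%nat -> (k < d)%nat -> V k (S j) = 0.
Proof. intros HV Hj k Hk Hkd. exact (proj2 (HV k (S j) Hkd Hj) Hk). Qed.

Lemma row_below_diag_zero d (A : mat) i :
  in_U d A -> (i < d)%nat -> forall k, (k < i)%nat -> A i k = 0.
Proof. intros HA Hi k Hk. exact (proj2 (HA i k Hi ltac:(lia)) Hk). Qed.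

Lemma msub_row_below_diag_zero d A A' i :
  in_U d A -> in_U d A' -> (i < d)%nat -> forall k, (k < i)%nat -> msub A A' i k = 0.
Proof.
  intros HA HA' Hi k Hk. unfold msub.
  rewrite (row_below_diag_zero d A i HA Hi k Hk), (row_below_diag_zero d A' i HA' Hi k Hk). ring.
Qed.

Lemma mpow_mprodseq d u n : mpow d u n = mprodseq d (fun _ => u) n.
Proof. induction n as [|n IH]; simpl; [|rewrite IH]; reflexivity. Qed.

(* Below the diagonal the truncated exponent j - i is 0, matching theta leaving A i j unchanged. *)
Lemma theta_eq t A i j : theta t A i j = t ^ (j - i) * A i j.
Proof.
  unfold theta. destruct (Nat.leb_spec i j); [reflexivity|].
  replace (j - i)%nat with 0%nat by lia. simpl. ring.
Qed.

Definition envelope (C L : R) (n g : nat) : R := C ^ g * (INR n + L) ^ g.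

Section Envelope.

Variables (C L : R).
Hypotheses (C_ge1 : 1 <= C) (L_ge1 : 1 <= L).

Let base_ge1 n : 1 <= INR n + L.
Proof. pose proof (pos_INR n). lra. Qed.

Lemma envelope_ge1 n g : 1 <= envelope C L n g.
Proof.
  unfold envelope. rewrite <- (Rmult_1_l 1).
  apply Rmult_le_compat; try lra; apply pow_R1_Rle; auto.
Qed.

Lemma envelope_lower n k g :
  (k < g)%nat -> (INR n + L) * envelope C L n k <= envelope C L n g.
Proof.
  intros Hkg. unfold envelope. set (x := INR n + L).
  assert (Hx : 1 <= x) by apply base_ge1.
  assert (C ^ k <= C ^ g) by (apply Rle_pow; auto; lia).
  assert (x ^ S k <= x ^ g) by (apply Rle_pow; auto; lia).
  assert (0 <= C ^ k) by (apply pow_le; lra).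
  assert (0 <= x ^ k) by (apply pow_le; lra).
  simpl in *. rewrite Rmult_comm, Rmult_assoc.
  apply Rmult_le_compat; nra.
Qed.

(* (x+1)^(g+1) >= x^(g+1) + x^g absorbs a lower-order term of size (C-1) C^g x^g. *)
Lemma envelope_succ n g :
  envelope C L n (S g) + (C - 1) * envelope C L n g <= envelope C L (S n) (S g).
Proof.
  unfold envelope. rewrite S_INR. set (x := INR n + L).
  replace (INR n + 1 + L) with (x + 1) by (unfold x; ring).
  assert (Hx : 1 <= x) by apply base_ge1.
  assert (x ^ g <= (x + 1) ^ g) by (apply pow_incr; lra).
  assert (0 <= x ^ g) by (apply pow_le; lra).
  assert (1 <= C ^ g) by (apply pow_R1_Rle; auto).
  assert (Hlow : (C - 1) * (C ^ g * x ^ g) <= C * C ^ g * x ^ g) by nra.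
  apply Rle_trans with (C * C ^ g * ((x + 1) * x ^ g)); [simpl; nra|].
  simpl. apply Rmult_le_compat_l; nra.
Qed.

Lemma envelope_dilation d n g :
  L <= INR n -> (g <= d)%nat -> (/ INR n) ^ g * envelope C L n g <= (2 * C) ^ d.
Proof.
  intros HLn Hgd. unfold envelope.
  assert (Hn : 0 < INR n) by lra.
  rewrite <- Rmult_assoc, <- !Rpow_mult_distr.
  apply Rle_trans with ((2 * C) ^ g); [|apply Rle_pow; auto; lra].
  apply pow_incr. split.
  - apply Rmult_le_pos; [apply Rmult_le_pos|]; try lra. apply Rlt_le, Rinv_0_lt_compat; lra.
  - apply (Rmult_le_reg_r (INR n)); auto.
    replace (/ INR n * C * (INR n + L) * INR n) with (C * (INR n + L)) by (field; lra). nra.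
Qed.

Definition within_envelope (d : nat) (K : R) (n : nat) (A : mat) : Prop :=
  forall i j, (i <= j)%nat -> (j < d)%nat -> Rabs (A i j) <= K * envelope C L n (j - i).

Lemma rsum_row_envelope d K n A i j :
  0 <= K -> within_envelope d K n A -> (forall k, (k < i)%nat -> A i k = 0) ->
  (i <= j)%nat -> (j < d)%nat ->
  (INR n + L) * rsum j (fun k => Rabs (A i k)) <= INR j * (K * envelope C L n (j - i)).
Proof.
  intros HK Henv Hrow Hij Hj. rewrite rsum_scal_l. apply rsum_le_const. intros k Hk.
  assert (Hx : 1 <= INR n + L) by apply base_ge1.
  assert (0 <= K * envelope C L n (j - i)) by (pose proof (envelope_ge1 n (j - i)); nra).
  destruct (Nat.lt_ge_cases k i) as [Hki|Hik].
  - rewrite Hrow, Rabs_R0 by auto. lra.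
  - pose proof (Henv i k Hik ltac:(lia)).
    pose proof (envelope_lower n (k - i) (j - i) ltac:(lia)).
    apply Rle_trans with ((INR n + L) * (K * envelope C L n (k - i)));
      [apply Rmult_le_compat_l; lra | nra].
Qed.

Lemma envelope_induction d K (a : nat -> mat) :
  0 <= K ->
  (forall i j, (i <= j)%nat -> (j < d)%nat -> Rabs (a 0%nat i j) <= K) ->
  (forall n i, (i < d)%nat -> Rabs (a n i i) <= K) ->
  (forall n, within_envelope d K n (a n) ->
     forall i j, (i <= j)%nat -> (S j < d)%nat ->
       Rabs (a (S n) i (S j)) <= Rabs (a n i (S j)) + (C - 1) * K * envelope C L n (j - i)) ->
  forall n, within_envelope d K n (a n).
Proof.
  intros HK H0 Hdiag Hstep n. induction n as [|n IH]; intros i j Hij Hj.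
  - pose proof (envelope_ge1 0 (j - i)). pose proof (H0 i j Hij Hj). nra.
  - destruct (Nat.eq_dec i j) as [<-|Hne].
    + rewrite Nat.sub_diag. unfold envelope. simpl. rewrite !Rmult_1_r. auto.
    + destruct j as [|j]; [lia|].
      replace (S j - i)%nat with (S (j - i)) by lia.
      pose proof (Hstep n IH i j ltac:(lia) Hj).
      pose proof (IH i (S j) Hij Hj). replace (S j - i)%nat with (S (j - i)) in * by lia.
      pose proof (envelope_succ n (j - i)). nra.
Qed.

End Envelope.

Lemma tail_absorb d j n b k L T E :
  (j <= d)%nat -> 0 <= b -> 0 <= E -> 1 <= L -> INR d * b <= k * L ->
  (INR n + L) * T <= INR j * b * E -> T <= k * E.
Proof.
  intros Hjd Hb HE HL HdL HT. pose proof (pos_INR n).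
  assert (Hjb : INR j * b <= k * (INR n + L)).
  { assert (INR j * b <= INR d * b) by (apply Rmult_le_compat_r; [lra | apply le_INR; lia]).
    assert (0 <= k) by (pose proof (pos_INR d); nra). nra. }
  apply (Rmult_le_reg_l (INR n + L)); [lra|].
  apply Rle_trans with (INR j * b * E); [lra|].
  replace ((INR n + L) * (k * E)) with (k * (INR n + L) * E) by ring.
  apply Rmult_le_compat_r; lra.
Qed.

Definition entries_bounded (d : nat) (B : R) (A : mat) : Prop :=
  forall i j, (i < d)%nat -> (j < d)%nat -> Rabs (A i j) <= B.

Definition superdiag_bounded (d : nat) (M : R) (A : mat) : Prop :=
  forall j, (S j < d)%nat -> Rabs (A j (S j)) <= M.

Section ProductGrowth.

Variables (d : nat) (M B C L : R) (vs : nat -> mat).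
Hypotheses (M_ge0 : 0 <= M) (B_ge0 : 0 <= B) (L_ge1 : 1 <= L) (dB_le_L : INR d * B <= L).
Hypothesis vs_U : forall n, (1 <= n)%nat -> in_U d (vs n).
Hypothesis vs_bounded : forall n, (1 <= n)%nat -> entries_bounded d B (vs n).
Hypothesis vs_superdiag : forall n, (1 <= n)%nat -> superdiag_bounded d M (vs n).

Lemma mprodseq_envelope (C_ge : M + 2 <= C) :
  forall n, within_envelope C L d 1 n (mprodseq d vs n).
Proof.
  pose proof (in_U_mprodseq d vs vs_U) as PU.
  apply envelope_induction; try lra.
  - intros i j Hij Hj. simpl. unfold mid.
    destruct (Nat.eqb i j); rewrite ?Rabs_R1, ?Rabs_R0; lra.
  - intros n i Hi. rewrite (proj1 (PU n i i Hi Hi)), Rabs_R1. lra.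
  - intros n Henv i j Hij Hj. set (P := mprodseq d vs n).
    change (mprodseq d vs (S n)) with (mmul d P (vs (S n))).
    pose proof (vs_U (S n) ltac:(lia)) as VU.
    pose proof (mmul_last_col_bound d P (vs (S n)) i j 1 M B Hj
      (column_above_diag_zero d _ j VU Hj)
      ltac:(rewrite (proj1 (VU (S j) (S j) Hj Hj)), Rabs_R1; lra)
      (vs_superdiag (S n) ltac:(lia) j Hj)
      (fun k Hk => vs_bounded (S n) ltac:(lia) k (S j) ltac:(lia) Hj)) as Hcol.
    pose proof (rsum_row_envelope C L ltac:(lra) L_ge1 d 1 n P i j ltac:(lra) Henv
      (row_below_diag_zero d P i (PU n) ltac:(lia)) Hij ltac:(lia)) as Hsum.
    set (E := envelope C L n (j - i)) in *.
    set (T := rsum j (fun k => Rabs (P i k))) in *.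
    assert (HE : 1 <= E) by apply (envelope_ge1 C L ltac:(lra) L_ge1).
    assert (HS : B * T <= 1 * E).
    { apply (tail_absorb d j n B 1 L); try lia; try lra.
      replace ((INR n + L) * (B * T)) with (B * ((INR n + L) * T)) by ring.
      replace (INR j * B * E) with (B * (INR j * (1 * E))) by ring.
      apply Rmult_le_compat_l; lra. }
    assert (Rabs (P i j) <= 1 * E) by exact (Henv i j Hij ltac:(lia)).
    assert (M * Rabs (P i j) <= M * E) by (apply Rmult_le_compat_l; lra).
    assert ((M + 1) * E <= (C - 1) * E) by (apply Rmult_le_compat_r; lra). lra.
Qed.

End ProductGrowth.

Section DifferenceGrowth.

Variables (d : nat) (M B C L delta : R) (vs : nat -> mat) (u : mat).
Hypotheses (M_ge0 : 0 <= M) (B_ge0 : 0 <= B) (L_ge1 : 1 <= L) (dB_le_L : INR d * B <= L).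
Hypotheses (delta_gt0 : 0 < delta) (C_ge : M + 3 <= C).
Hypothesis delta_L : INR d * (delta + 2) * B <= delta * L.
Hypothesis vs_U : forall n, (1 <= n)%nat -> in_U d (vs n).
Hypothesis vs_bounded : forall n, (1 <= n)%nat -> entries_bounded d B (vs n).
Hypothesis vs_superdiag : forall n, (1 <= n)%nat -> superdiag_bounded d M (vs n).
Hypotheses (u_U : in_U d u) (u_bounded : entries_bounded d B u).
Hypothesis u_superdiag : superdiag_bounded d M u.
Hypothesis vs_close :
  forall n, (1 <= n)%nat -> forall j, (S j < d)%nat -> Rabs (vs n j (S j) - u j (S j)) <= delta.

Let PU : forall n, in_U d (mprodseq d vs n) := in_U_mprodseq d vs vs_U.
Let QU : forall n, in_U d (mprodseq d (fun _ => u) n) :=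
  in_U_mprodseq d (fun _ => u) (fun _ _ => u_U).
Let QE : forall n, within_envelope C L d 1 n (mprodseq d (fun _ => u) n) :=
  mprodseq_envelope d M B C L (fun _ => u) M_ge0 B_ge0 L_ge1 dB_le_L
    (fun _ _ => u_U) (fun _ _ => u_bounded) (fun _ _ => u_superdiag) ltac:(lra).

(* P_(n+1) - Q_(n+1) = (P_n - Q_n) v_(n+1) + Q_n (v_(n+1) - u): the first product propagates
   the envelope as for P_n, the second only contributes delta on the super-diagonal. *)
Lemma mprodseq_sub_step n (P := mprodseq d vs n) (Q := mprodseq d (fun _ => u) n)
    (v := vs (S n)) :
  within_envelope C L d delta n (msub P Q) ->
  forall i j, (i <= j)%nat -> (S j < d)%nat ->
    Rabs (mmul d (msub P Q) v i (S j) + mmul d Q (msub v u) i (S j))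
      <= Rabs (msub P Q i (S j)) + (C - 1) * delta * envelope C L n (j - i).
Proof.
  intros Henv i j Hij Hj.
  pose proof (vs_U (S n) ltac:(lia)) as VU.
  pose proof (mmul_last_col_bound d (msub P Q) v i j 1 M B Hj
    (column_above_diag_zero d _ j VU Hj)
    ltac:(unfold v; rewrite (proj1 (VU (S j) (S j) Hj Hj)), Rabs_R1; lra)
    (vs_superdiag (S n) ltac:(lia) j Hj)
    (fun k Hk => vs_bounded (S n) ltac:(lia) k (S j) ltac:(lia) Hj)) as HcolD.
  assert (Hvu : forall k, (k < j)%nat -> Rabs (msub v u k (S j)) <= 2 * B).
  { intros k Hk. unfold msub, v, Rminus.
    pose proof (Rabs_triang (vs (S n) k (S j)) (- u k (S j))). rewrite Rabs_Ropp in *.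
    pose proof (u_bounded k (S j) ltac:(lia) Hj).
    pose proof (vs_bounded (S n) ltac:(lia) k (S j) ltac:(lia) Hj). lra. }
  pose proof (mmul_last_col_bound d Q (msub v u) i j 0 delta (2 * B) Hj
    (fun k Hk Hkd => ltac:(unfold msub; rewrite (column_above_diag_zero d v j VU Hj k Hk Hkd),
       (column_above_diag_zero d u j u_U Hj k Hk Hkd); ring))
    ltac:(unfold msub, v; rewrite (proj1 (VU (S j) (S j) Hj Hj)),
       (proj1 (u_U (S j) (S j) Hj Hj)), Rminus_diag, Rabs_R0; lra)
    (vs_close (S n) ltac:(lia) j Hj) Hvu) as HcolQ.
  pose proof (rsum_row_envelope C L ltac:(lra) L_ge1 d delta n (msub P Q) i j ltac:(lra) Henv
    (msub_row_below_diag_zero d P Q i (PU n) (QU n) ltac:(lia)) Hij ltac:(lia)) as HsumD.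
  pose proof (rsum_row_envelope C L ltac:(lra) L_ge1 d 1 n Q i j ltac:(lra) (QE n)
    (row_below_diag_zero d Q i (QU n) ltac:(lia)) Hij ltac:(lia)) as HsumQ.
  set (E := envelope C L n (j - i)) in *.
  set (TD := rsum j (fun k => Rabs (msub P Q i k))) in *.
  set (TQ := rsum j (fun k => Rabs (Q i k))) in *.
  assert (HE : 1 <= E) by apply (envelope_ge1 C L ltac:(lra) L_ge1).
  assert (Htail : B * TD + 2 * B * TQ <= delta * E).
  { apply (tail_absorb d j n ((delta + 2) * B) delta L); [lia | nra | lra | lra | nra |].
    replace ((INR n + L) * (B * TD + 2 * B * TQ))
        with (B * ((INR n + L) * TD) + 2 * B * ((INR n + L) * TQ)) by ring.
      replace (INR j * ((delta + 2) * B) * E)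
        with (B * (INR j * (delta * E)) + 2 * B * (INR j * (1 * E))) by ring.
      apply Rplus_le_compat; apply Rmult_le_compat_l; lra. }
  assert (Rabs (msub P Q i j) <= delta * E) by exact (Henv i j Hij ltac:(lia)).
  assert (Rabs (Q i j) <= 1 * E) by exact (QE n i j Hij ltac:(lia)).
  assert (M * Rabs (msub P Q i j) <= M * (delta * E)) by (apply Rmult_le_compat_l; lra).
  assert (delta * Rabs (Q i j) <= delta * E) by (apply Rmult_le_compat_l; lra).
  assert ((M + 2) * (delta * E) <= (C - 1) * (delta * E)) by (apply Rmult_le_compat_r; nra).
  pose proof (Rabs_triang (mmul d (msub P Q) v i (S j)) (mmul d Q (msub v u) i (S j))).
  lra.
Qed.

Lemma mprodseq_sub_envelope :
  forall n, within_envelope C L d delta n (msub (mprodseq d vs n) (mprodseq d (fun _ => u) n)).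
Proof.
  apply envelope_induction; try lra.
  - intros i j _ _. simpl. unfold msub. rewrite Rminus_diag, Rabs_R0. lra.
  - intros n i Hi. unfold msub.
    rewrite (proj1 (PU n i i Hi Hi)), (proj1 (QU n i i Hi Hi)), Rminus_diag, Rabs_R0. lra.
  - intros n Henv i j Hij Hj.
    change (msub (mprodseq d vs (S n)) (mprodseq d (fun _ => u) (S n)) i (S j))
      with (mmul d (mprodseq d vs n) (vs (S n)) i (S j)
            - mmul d (mprodseq d (fun _ => u) n) u i (S j)).
    rewrite mmul_sub_decomp. exact (mprodseq_sub_step n Henv i j Hij Hj).
Qed.

End DifferenceGrowth.

Lemma envelope_offset_exists d B delta :
  0 <= B -> 0 < delta ->
  exists L, 1 <= L /\ INR d * B <= L /\ INR d * (delta + 2) * B <= delta * L.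
Proof.
  intros HB Hdelta. pose proof (pos_INR d).
  assert (0 <= INR d * B) by nra.
  assert (0 <= INR d * (delta + 2) * B / delta).
  { apply Rmult_le_pos; [|apply Rlt_le, Rinv_0_lt_compat; lra].
    apply Rmult_le_pos; [apply Rmult_le_pos|]; lra. }
  exists (1 + INR d * B + INR d * (delta + 2) * B / delta). repeat split; try lra.
  replace (delta * (1 + INR d * B + INR d * (delta + 2) * B / delta))
    with (delta * (1 + INR d * B) + INR d * (delta + 2) * B) by (field; lra). nra.
Qed.

Lemma theta_sub_envelope d C L delta P Q n i j :
  1 <= C -> 1 <= L -> L <= INR n -> in_U d P -> in_U d Q ->
  within_envelope C L d delta n (msub P Q) -> 0 < delta -> (i < d)%nat -> (j < d)%nat ->
  Rabs (theta (/ INR n) P i j - theta (/ INR n) Q i j) <= delta * (2 * C) ^ d.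
Proof.
  intros HC HL HLn HP HQ Henv Hdelta Hi Hj.
  assert (HC2 : 0 <= (2 * C) ^ d) by (apply pow_le; lra).
  rewrite !theta_eq, <- Rmult_minus_distr_l, Rabs_mult.
  change (P i j - Q i j) with (msub P Q i j).
  destruct (Nat.le_gt_cases i j) as [Hij|Hji].
  - assert (Hpos : 0 <= (/ INR n) ^ (j - i)) by (apply pow_le, Rlt_le, Rinv_0_lt_compat; lra).
    rewrite (Rabs_pos_eq _ Hpos).
    pose proof (envelope_dilation C L HC ltac:(lra) d n (j - i) HLn ltac:(lia)).
    apply Rle_trans with ((/ INR n) ^ (j - i) * (delta * envelope C L n (j - i)));
      [apply Rmult_le_compat_l; auto|nra].
  - rewrite (msub_row_below_diag_zero d P Q i HP HQ Hi j Hji), Rabs_R0, Rmult_0_r. nra.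
Qed.

Theorem mainTheorem15 (d : nat) :
  forall eps Mb : R, 0 < eps -> 0 < Mb ->
  exists delta : R, 0 < delta /\
  forall (u : mat) (us : nat -> mat),
    in_U d u ->
    (forall n, (1 <= n)%nat -> in_U d (us n)) ->
    (exists B : R, forall i j, (i < d)%nat -> (j < d)%nat ->
        Rabs (u i j) <= B /\
        forall n, (1 <= n)%nat -> Rabs (us n i j) <= B) ->
    (forall i, (S i < d)%nat ->
        Rabs (u i (S i)) <= Mb /\
        forall n, (1 <= n)%nat ->
          Rabs (us n i (S i)) <= Mb /\
          Rabs (us n i (S i) - u i (S i)) <= delta) ->
    forall i j, (i < d)%nat -> (j < d)%nat ->
      limsup_lt
        (fun n => Rabs (theta (/ INR n) (mprodseq d us n) i j
                        - theta (/ INR n) (mpow d u n) i j))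
        eps.
Proof.
  intros eps M Heps HM.
  set (C := M + 3).
  assert (HC : 0 < (2 * C) ^ d) by (apply pow_lt; unfold C; lra).
  exists (eps / (2 * (2 * C) ^ d)). split; [apply Rdiv_lt_0_compat; lra|].
  set (delta := eps / (2 * (2 * C) ^ d)).
  assert (Hdelta : 0 < delta) by (apply Rdiv_lt_0_compat; lra).
  intros u us Hu HU [B0 HB0] HMb i j Hi Hj.
  assert (Hub : entries_bounded d (Rabs B0) u).
  { intros k l Hk Hl. pose proof (Rle_abs B0). pose proof (proj1 (HB0 k l Hk Hl)). lra. }
  assert (Husb : forall n, (1 <= n)%nat -> entries_bounded d (Rabs B0) (us n)).
  { intros n Hn k l Hk Hl. pose proof (Rle_abs B0). pose proof (proj2 (HB0 k l Hk Hl) n Hn). lra. }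
  destruct (envelope_offset_exists d (Rabs B0) delta (Rabs_pos B0) Hdelta)
    as (L & HL1 & HdB & HdL).
  pose proof (mprodseq_sub_envelope d M (Rabs B0) C L delta us u ltac:(lra) (Rabs_pos B0) HL1
    HdB Hdelta ltac:(unfold C; lra) HdL HU Husb
    (fun n Hn k Hk => proj1 (proj2 (HMb k Hk) n Hn)) Hu Hub (fun k Hk => proj1 (HMb k Hk))
    (fun n Hn k Hk => proj2 (proj2 (HMb k Hk) n Hn))) as HD.
  destruct (INR_unbounded L) as [N HN].
  exists (eps / 2). split; [lra|]. exists N. intros n Hn.
  rewrite mpow_mprodseq.
  eapply Rle_trans.
  { apply (theta_sub_envelope d C L delta); auto.
    - unfold C; lra.
    - pose proof (le_INR N n Hn). lra.
    - now apply in_U_mprodseq.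
    - now apply in_U_mprodseq. }
  unfold delta. right. field. lra.
Qed.
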